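(* Let $F$ be a Banach lattice and $\tau$ a linear topology on $F$ weaker than the norm topology, with the Kadec-Pelczynski property. Then (i) $\tau$ agrees with the norm topology on every dispersed closed subspace of $F$; (ii) every DNS operator $T:F\to H$ into a Banach space complements $\tau$.
   Context: $\mathrm{S}_F$ is the unit sphere. A sequence $(e_n)\subset\mathrm{S}_F$ is almost disjoint if there is a disjoint $(f_n)\subset F$ ($|f_n|\wedge|f_m|=0$, $n\ne m$) with $\|e_n-f_n\|\to0$; a closed subspace is dispersed if it contains no almost disjoint sequence. $\tau$ has the Kadec-Pelczynski property if whenever $(f_p)_{p\in P}\subset\mathrm{S}_F$ is a $\tau$-null net and $(q_n)_{n\in\mathbb{N}}\subset P$, there are $p_n\ge q_n$ in $P$ with $(f_{p_n})_n$ almost disjoint. $T$ is DNS if no disjoint $(f_n)\subset\mathrm{S}_F$ has $\|Tf_n\|\to0$. $T$ complements $\tau$ if there is no net in $\mathrm{S}_F$ which is $\tau$-null and along which $\|Tf_p\|\to0$. *)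

From HB Require Import structures.
From mathcomp Require Import all_boot all_order all_algebra.
From mathcomp Require Import all_classical all_reals all_analysis.
Import Order.TTheory GRing.Theory Num.Theory.
Import numFieldNormedType.Exports.
Set Implicit Arguments. Unset Strict Implicit. Unset Printing Implicit Defensive.
Local Open Scope classical_set_scope.
Local Open Scope ring_scope.

(* Together with
   completeness of F (required in the theorem) this is a Banach lattice. *)
Record banach_lattice (R : realType) (F : normedModType R) := BanachLattice {
  bl_le : F -> F -> Prop;
  bl_join : F -> F -> F;
  bl_le_refl : forall x, bl_le x x;
  bl_le_anti : forall x y, bl_le x y -> bl_le y x -> x = y;
  bl_le_trans : forall x y z, bl_le x y -> bl_le y z -> bl_le x z;
  bl_le_add : forall x y z, bl_le x y -> bl_le (x + z) (y + z);
  bl_le_scale : forall (a : R) x y, 0 <= a -> bl_le x y -> bl_le (a *: x) (a *: y);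
  bl_join_ubl : forall x y, bl_le x (bl_join x y);
  bl_join_ubr : forall x y, bl_le y (bl_join x y);
  bl_join_least : forall x y z, bl_le x z -> bl_le y z -> bl_le (bl_join x y) z;
  bl_norm_mono : forall x y,
    bl_le (bl_join x (- x)) (bl_join y (- y)) -> `|x| <= `|y|
}.

Section BL.
Context {R : realType} {F : normedModType R} (L : banach_lattice F).

Definition bl_meet (x y : F) : F := - bl_join L (- x) (- y).
Definition bl_abs (x : F) : F := bl_join L x (- x).
Definition bl_disjoint (x y : F) : Prop := bl_meet (bl_abs x) (bl_abs y) = 0.
Definition disjoint_seq (f : nat -> F) : Prop :=
  forall n m : nat, n <> m -> bl_disjoint (f n) (f m).

Definition almost_disjoint (e : nat -> F) : Prop :=
  (forall n, `|e n| = 1) /\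
  exists g : nat -> F, disjoint_seq g /\
    ((fun n => `|e n - g n|) : nat -> R) @ \oo --> (0 : R).

Definition closed_subspace (E : set F) : Prop :=
  E 0 /\ (forall x y, E x -> E y -> E (x + y)) /\
  (forall (a : R) x, E x -> E (a *: x)) /\ closed E.

Definition dispersed (E : set F) : Prop :=
  closed_subspace E /\ ~ (exists e : nat -> F, (forall n, E (e n)) /\ almost_disjoint e).
End BL.

Record linear_topology (R : realType) (F : normedModType R) := LinearTopology {
  lt_open : set F -> Prop;
  lt_openT : lt_open setT;
  lt_openU : forall (I : Type) (U : I -> set F),
     (forall i, lt_open (U i)) -> lt_open (\bigcup_(i in [set: I]) U i);
  lt_openI : forall U V, lt_open U -> lt_open V -> lt_open (U `&` V);
  lt_add_cont : forall U (x y : F), lt_open U -> U (x + y) ->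
     exists V W, lt_open V /\ lt_open W /\ V x /\ W y /\
       (forall v w, V v -> W w -> U (v + w));
  lt_scale_cont : forall U (a : R) (x : F), lt_open U -> U (a *: x) ->
     exists e : R, 0 < e /\ exists V, lt_open V /\ V x /\
       (forall (b : R) v, `|b - a| < e -> V v -> U (b *: v))
}.

Definition weaker_than_norm {R : realType} {F : normedModType R}
  (tau : linear_topology F) : Prop :=
  forall U, lt_open tau U -> open U.

Definition directed {P : Type} (le : P -> P -> Prop) : Prop :=
  (exists p : P, True) /\ (forall p, le p p) /\
  (forall p q r, le p q -> le q r -> le p r) /\
  (forall p q, exists r, le p r /\ le q r).

Definition tau_null {R : realType} {F : normedModType R}
  (tau : linear_topology F) {P : Type} (le : P -> P -> Prop) (f : P -> F) : Prop :=
  forall U, lt_open tau U -> U 0 -> exists p0, forall p, le p0 p -> U (f p).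

Definition net_to_zero {R : realType} {P : Type} (le : P -> P -> Prop)
  (g : P -> R) : Prop :=
  forall e : R, 0 < e -> exists p0, forall p, le p0 p -> `|g p| < e.

Definition kadec_pelczynski {R : realType} {F : normedModType R}
  (L : banach_lattice F) (tau : linear_topology F) : Prop :=
  forall (P : Type) (le : P -> P -> Prop), directed le ->
  forall f : P -> F, (forall p, `|f p| = 1) -> tau_null tau le f ->
  forall q : nat -> P, exists p : nat -> P,
    (forall n, le (q n) (p n)) /\ almost_disjoint L (fun n => f (p n)).

Definition DNS {R : realType} {F H : normedModType R}
  (L : banach_lattice F) (T : F -> H) : Prop :=
  ~ exists f : nat -> F, disjoint_seq L f /\ (forall n, `|f n| = 1) /\
      ((fun n => `|T (f n)|) : nat -> R) @ \oo --> (0 : R).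

Definition complements {R : realType} {F H : normedModType R}
  (tau : linear_topology F) (T : F -> H) : Prop :=
  ~ exists (P : Type) (le : P -> P -> Prop) (f : P -> F),
      directed le /\ (forall p, `|f p| = 1) /\ tau_null tau le f /\
      net_to_zero le (fun p => `|T (f p)|).

From HB Require Import structures.
From mathcomp Require Import all_boot all_order all_algebra.
From mathcomp Require Import all_classical all_reals all_analysis.
From mathcomp Require Import ring lra.
Import Order.TTheory GRing.Theory Num.Theory.
Import numFieldNormedType.Exports.
Set Implicit Arguments.
Unset Strict Implicit.

Local Open Scope classical_set_scope.
Local Open Scope ring_scope.

(* (i) If the tau-neighbourhoods of 0 were not eventually norm-small on a
   dispersed subspace E, rescaling would give a tau-null net in the unit sphere
   of E, indexed by those neighbourhoods; the Kadec-Pelczynski property extracts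
   an almost disjoint sequence from it, which dispersedness forbids.  So the
   relative norm topology on E is coarser than tau, and it is finer because tau
   is weaker than the norm.
   (ii) A tau-null net in the unit sphere along which |T f_p| -> 0 yields, by the
   Kadec-Pelczynski property, an almost disjoint sequence e_n with |T e_n| -> 0.
   As T is bounded, the nearby disjoint sequence g_n also has |T g_n| -> 0 and
   |g_n| -> 1, so the normalised g_n contradict DNS. *)

Section VectorLattice.
Context {R : realType} {F : normedModType R} (L : banach_lattice F).
Local Notation le := (bl_le L).
Local Notation join := (bl_join L).

Lemma bl_le_opp x y : le x y -> le (- y) (- x).
Proof.
move=> h; have := bl_le_add (- x - y) h.
by rewrite addrA subrr add0r addrCA subrr addr0.
Qed.

Lemma bl_le_scaler (c d : R) a : le 0 a -> c <= d -> le (c *: a) (d *: a).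
Proof.
move=> a0 cd; have dc : 0 <= d - c by rewrite subr_ge0.
have := bl_le_add (c *: a) (bl_le_scale dc a0).
by rewrite scaler0 add0r -scalerDl subrK.
Qed.

Lemma bl_abs_ge0 x : le 0 (bl_abs L x).
Proof.
set a := bl_abs L x.
have a_x : le 0 (a - x) by have := bl_le_add (- x) (bl_join_ubl L x (- x)); rewrite subrr.
have ax_2a : le (a - x) (a + a).
  by have := bl_le_add a (bl_join_ubr L x (- x)); rewrite addrC.
have half_ge0 : 0 <= 2^-1 :> R by rewrite invr_ge0.
have := bl_le_scale half_ge0 (bl_le_trans a_x ax_2a).
have two_a : a + a = 2 *: a by rewrite scaler_nat mulr2n.
by rewrite scaler0 two_a scalerA mulVf ?pnatr_eq0 // scale1r.
Qed.

Lemma bl_meet_ge0 a b : le 0 a -> le 0 b -> le 0 (bl_meet L a b).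
Proof.
move=> a0 b0; rewrite /bl_meet -oppr0; apply: bl_le_opp.
by apply: bl_join_least; rewrite -oppr0; apply: bl_le_opp.
Qed.

Lemma bl_le_meet a b a' b' : le a a' -> le b b' -> le (bl_meet L a b) (bl_meet L a' b').
Proof.
move=> aa' bb'; rewrite /bl_meet; apply: bl_le_opp; apply: bl_join_least.
  exact: bl_le_trans (bl_le_opp aa') (bl_join_ubl L _ _).
exact: bl_le_trans (bl_le_opp bb') (bl_join_ubr L _ _).
Qed.

Lemma bl_join_le_scale (c : R) x y : 0 < c -> le (join (c *: x) (c *: y)) (c *: join x y).
Proof.
move=> c0; apply: bl_join_least; apply: bl_le_scale (ltW c0) _.
  exact: bl_join_ubl.
exact: bl_join_ubr.
Qed.

Lemma bl_joinZ (c : R) x y : 0 < c -> c *: join x y = join (c *: x) (c *: y).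
Proof.
move=> c0; apply: bl_le_anti; last exact: bl_join_le_scale.
have cV0 : 0 < c^-1 by rewrite invr_gt0.
have := bl_join_le_scale (c *: x) (c *: y) cV0.
rewrite !scalerA mulVf ?gt_eqF // !scale1r => h.
by have := bl_le_scale (ltW c0) h; rewrite scalerA divff ?gt_eqF // scale1r.
Qed.

Lemma bl_absZ (c : R) x : 0 < c -> bl_abs L (c *: x) = c *: bl_abs L x.
Proof. by move=> c0; rewrite /bl_abs bl_joinZ // scalerN. Qed.

Lemma bl_meetZ (c : R) a b : 0 < c -> bl_meet L (c *: a) (c *: b) = c *: bl_meet L a b.
Proof. by move=> c0; rewrite /bl_meet -!scalerN -bl_joinZ // scalerN. Qed.

(* Both scalings are dominated by the larger one, which commutes with the meet. *)
Lemma bl_disjointZ (c d : R) x y : 0 < c -> 0 < d ->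
  bl_disjoint L x y -> bl_disjoint L (c *: x) (d *: y).
Proof.
move=> c0 d0 xy; rewrite /bl_disjoint (bl_absZ x c0) (bl_absZ y d0).
set M := Num.max c d.
have M0 : 0 < M by rewrite lt_max c0.
have ax := bl_abs_ge0 x; have ay := bl_abs_ge0 y.
have cM : c <= M by rewrite le_max lexx.
have dM : d <= M by rewrite le_max lexx orbT.
have := bl_le_meet (bl_le_scaler ax cM) (bl_le_scaler ay dM).
rewrite bl_meetZ // xy scaler0 => le_meet0; apply: bl_le_anti le_meet0 _.
apply: bl_meet_ge0.
  by have := bl_le_scale (ltW c0) ax; rewrite scaler0.
by have := bl_le_scale (ltW d0) ay; rewrite scaler0.
Qed.
End VectorLattice.

Section LinearTopology.
Context {R : realType} {F : normedModType R} (tau : linear_topology F).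

Lemma lt_open_local (S : set F) :
  (forall y, S y -> exists V, lt_open tau V /\ V y /\ V `<=` S) -> lt_open tau S.
Proof.
move=> Sloc.
have [V HV] := choice (fun i : {y | S y} => Sloc (sval i) (proj2_sig i)).
have -> : S = \bigcup_(i in [set: {y | S y}]) V i.
  apply/seteqP; split => [y Sy|y [i _ Viy]].
    by exists (exist _ y Sy) => //; have [_ []] := HV (exist _ y Sy).
  by have [_ [_]] := HV i; apply.
by apply: lt_openU => i; have [] := HV i.
Qed.

Lemma lt_open_translate (W : set F) (x : F) :
  lt_open tau W -> lt_open tau [set y | W (y - x)].
Proof.
move=> oW; apply: lt_open_local => y /= Wy.
have [V [W' [oV [_ [Vy [W'x VW]]]]]] := lt_add_cont oW Wy.
by exists V; split; [|split] => // v Vv /=; apply: VW.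
Qed.

Lemma lt_open_scale (W : set F) (k : R) :
  lt_open tau W -> lt_open tau [set y | W (k *: y)].
Proof.
move=> oW; apply: lt_open_local => y /= Wy.
have [e [e0 [V [oV [Vy VW]]]]] := lt_scale_cont oW Wy.
exists V; split; [|split] => // v Vv /=; apply: VW => //.
by rewrite subrr normr0.
Qed.

Definition lt_nbhs0 := {W : set F | lt_open tau W /\ W 0}.

Definition lt_nbhs0_le (W1 W2 : lt_nbhs0) := sval W2 `<=` sval W1.

Lemma lt_nbhs0_directed : directed lt_nbhs0_le.
Proof.
split; first by exists (exist _ setT (conj (lt_openT tau) I)).
split; first by move=> W; rewrite /lt_nbhs0_le.
split; first by move=> W1 W2 W3 W12 W23 x /W23 /W12.
move=> [W1 [oW1 W10]] [W2 [oW2 W20]].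
exists (exist _ (W1 `&` W2) (conj (lt_openI oW1 oW2) (conj W10 W20))).
by split => x [].
Qed.

Lemma tau_null_nbhs0_selection (f : lt_nbhs0 -> F) :
  (forall W, sval W (f W)) -> tau_null tau lt_nbhs0_le f.
Proof. by move=> fW U oU U0; exists (exist _ U (conj oU U0)) => W; apply; apply: fW. Qed.

(* Continuity of scaling at 0: a large point of the smaller neighbourhood
   [k^-1 V] is shrunk into W by the small factor [(k |g|)^-1]. *)
Lemma lt_nbhs0_meets_sphere (E : set F) (eps : R) :
  (forall (a : R) x, E x -> E (a *: x)) -> 0 < eps ->
  (forall W, lt_open tau W -> W 0 -> exists g, [/\ W g, E g & eps <= `|g|]) ->
  forall W, lt_open tau W -> W 0 -> exists f, [/\ W f, E f & `|f| = 1].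
Proof.
move=> EZ eps0 big W oW W0.
have W00 : W (0 *: (0 : F)) by rewrite scaler0.
have [e [e0 [V [oV [V0 VW]]]]] := lt_scale_cont oW W00.
pose k := 2 / (e * eps).
have k0 : 0 < k by rewrite divr_gt0 // mulr_gt0.
have kV0 : [set y | V (k *: y)] 0 by rewrite /= scaler0.
have [g [Vkg Eg eps_g]] := big _ (lt_open_scale k oV) kV0.
have g0 : 0 < `|g| := lt_le_trans eps0 eps_g.
have kg0 : 0 < k * `|g| by rewrite mulr_gt0.
have kg_lt_e : (k * `|g|)^-1 < e.
  rewrite -[X in X < _]mul1r ltr_pdivrMr //.
  have -> : e * (k * `|g|) = 2 * (`|g| / eps).
    by rewrite /k; field; rewrite ?mulf_neq0 ?gt_eqF.
  have : 1 <= `|g| / eps by rewrite ler_pdivlMr // mul1r.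
  lra.
exists (`|g|^-1 *: g); split.
- have -> : `|g|^-1 *: g = (k * `|g|)^-1 *: (k *: g).
    by rewrite scalerA invfM mulrAC mulVf ?gt_eqF // mul1r.
  by apply: VW => //; rewrite subr0 gtr0_norm ?invr_gt0.
- exact: EZ.
- by rewrite normrZ normfV normr_id mulVf ?gt_eqF.
Qed.
End LinearTopology.

Lemma dispersed_tau_nbhs0_small {R : realType} {F : normedModType R}
    (L : banach_lattice F) (tau : linear_topology F) (E : set F) (eps : R) :
  kadec_pelczynski L tau -> dispersed L E -> 0 < eps ->
  exists W, [/\ lt_open tau W, W 0 & forall y, W y -> E y -> `|y| < eps].
Proof.
move=> KP [[_ [_ [EZ _]]] noAD] eps0; apply: contrapT => small.
have big W : lt_open tau W -> W 0 -> exists g, [/\ W g, E g & eps <= `|g|].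
  move=> oW W0; apply: contrapT => nbig; apply: small; exists W; split => // y Wy Ey.
  by rewrite ltNge; apply/negP => eps_y; apply: nbig; exists y.
have [f Hf] := choice (fun W : lt_nbhs0 tau =>
  lt_nbhs0_meets_sphere EZ eps0 big (proj1 (proj2_sig W)) (proj2 (proj2_sig W))).
have dir := lt_nbhs0_directed tau; have [[W0 _] _] := dir.
have f1 W : `|f W| = 1 by have [] := Hf W.
have f_null : tau_null tau (@lt_nbhs0_le _ _ tau) f.
  by apply: tau_null_nbhs0_selection => W; have [] := Hf W.
have [p [_ ad]] := KP _ _ dir f f1 f_null (fun=> W0).
by apply: noAD; exists (fun n => f (p n)); split => // n; have [] := Hf (p n).
Qed.

(* The tau-open set is the union over x in U `&` E of translates x + W_x, where
   W_x is a tau-neighbourhood of 0 that is norm-small on E. *)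
Lemma dispersed_open_trace {R : realType} {F : normedModType R}
    (L : banach_lattice F) (tau : linear_topology F) (E U : set F) :
  kadec_pelczynski L tau -> dispersed L E -> open U ->
  exists V, lt_open tau V /\ U `&` E = V `&` E.
Proof.
move=> KP dE oU; have [[_ [ED [EZ _]]] _] := dE.
exists [set y | exists x W, [/\ U x, E x, lt_open tau W, W (y - x)
                             & forall z, W z -> E z -> U (z + x)]].
split.
  apply: lt_open_local => y [x [W [Ux Ex oW Wyx WU]]].
  exists [set y' | W (y' - x)]; split; first exact: lt_open_translate.
  by split => // y' Wy'; exists x, W.
apply/seteqP; split => y [Uy Ey]; split => //.
  have /nbhs_ballP [eps eps0 epsU] : nbhs y U by apply: open_nbhs_nbhs.
  have [W [oW W0 Wsmall]] := dispersed_tau_nbhs0_small KP dE eps0.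
  exists y, W; split; rewrite ?subrr // => z Wz Ez; apply: epsU.
  by rewrite -ball_normE /= opprD addrCA subrr addr0 normrN; exact: Wsmall.
case: Uy => x [W [Ux Ex oW Wyx WU]].
have := WU _ Wyx; rewrite subrK; apply.
by apply: ED => //; rewrite -scaleN1r; apply: EZ.
Qed.

Lemma net_to_zero_cofinal_seq {R : realType} {P : Type} (le : P -> P -> Prop)
    (g : P -> R) :
  net_to_zero le g -> exists q : nat -> P,
    forall p : nat -> P, (forall n, le (q n) (p n)) -> g (p n) @[n --> \oo] --> 0.
Proof.
move=> g0; have [q Hq] := choice (fun n => g0 _ (harmonic_gt0 n)).
exists q => p qp; apply: (@squeeze_cvgr _ _ _ _ (- harmonic) harmonic).
- apply: nearW => n; have := Hq n (p n) (qp n).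
  by rewrite ltr_norml => /andP[lo hi]; rewrite !ltW.
- by rewrite -oppr0; apply: cvgN; exact: cvg_harmonic.
- exact: cvg_harmonic.
Qed.

Section DNS.
Context {R : realType} {F H : normedModType R} (L : banach_lattice F).
Variable T : {linear F -> H}.
Hypotheses (T_cont : continuous T) (T_DNS : DNS L T).

Lemma DNS_not_null_almost_disjoint (e : nat -> F) :
  almost_disjoint L e -> ~ (`|T (e n)| @[n --> \oo] --> 0).
Proof.
move=> [e1 [g [dg e_g]]] Te0.
have [r r0 Tr] : exists2 r : R, 0 < r & forall x, `|T x| <= r * `|x|.
  by have /linear_boundedP/pinfty_ex_gt0 := continuous_linear_bounded 0 (@T_cont 0).
have e_sub n : e n - (e n - g n) = g n by rewrite opprB addrC subrK.
have g1 : `|g n| @[n --> \oo] --> (1 : R).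
  apply: (@squeeze_cvgr _ _ _ _ (fun n => 1 - `|e n - g n|) (fun n => 1 + `|e n - g n|)).
  - apply: nearW => n; rewrite -(e1 n).
    have := lerB_dist (e n) (e n - g n); have := ler_normB (e n) (e n - g n).
    rewrite e_sub => hi lo; apply/andP; split; lra.
  - by rewrite -[X in _ --> X]subr0; apply: cvgB => //; exact: cvg_cst.
  - by rewrite -[X in _ --> X]addr0; apply: cvgD => //; exact: cvg_cst.
have Tg0 : `|T (g n)| @[n --> \oo] --> (0 : R).
  apply: (@squeeze_cvgr _ _ _ _ (fun=> 0) (fun n => `|T (e n)| + r * `|e n - g n|)).
  - apply: nearW => n; rewrite normr_ge0 /= -{1}(e_sub n) linearB.
    by apply: le_trans (ler_normB _ _) _; rewrite lerD2l.
  - exact: cvg_cst.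
  - rewrite -[X in _ --> X](addr0 0) -[X in _ --> _ + X](mulr0 r).
    by apply: cvgD => //; apply: cvgM => //; exact: cvg_cst.
have [N _ gN] := cvgr_gt 1 g1 0 ltr01.
have gN_gt0 n : 0 < `|g (n + N)| := gN _ (leq_addl _ _).
apply: T_DNS; exists (fun n => `|g (n + N)|^-1 *: g (n + N)); split; [|split].
- move=> n m nm; apply: bl_disjointZ; rewrite ?invr_gt0 //.
  by apply: dg => /addIn.
- by move=> n; rewrite normrZ normfV normr_id mulVf ?gt_eqF.
- under eq_fun do rewrite linearZ normrZ normfV normr_id.
  have := cvgM (cvgV (oner_neq0 R) g1) Tg0; rewrite mulr0 -(cvg_shiftn N).
  exact.
Qed.

Lemma DNS_complements (tau : linear_topology F) :
  kadec_pelczynski L tau -> complements tau T.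
Proof.
move=> KP [P [le [f [dir [f1 [f_null Tf0]]]]]].
have [q qP] := net_to_zero_cofinal_seq Tf0.
have [p [qp ad]] := KP P le dir f f1 f_null q.
exact: DNS_not_null_almost_disjoint ad (qP p qp).
Qed.
End DNS.

Theorem mainTheorem12 (R : realType) (F : completeNormedModType R)
  (L : banach_lattice F) (tau : linear_topology F) :
  weaker_than_norm tau -> kadec_pelczynski L tau ->
  (forall E : set F, dispersed L E ->
     (forall U : set F, open U -> exists V, lt_open tau V /\ U `&` E = V `&` E) /\
     (forall V : set F, lt_open tau V -> exists U, open U /\ V `&` E = U `&` E)) /\
  (forall (H : completeNormedModType R) (T : {linear F -> H}),
     continuous T -> DNS L T -> complements tau T).
Proof.
move=> weak KP; split=> [E dE|H T T_cont T_DNS].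
  split=> [U oU|V oV]; first exact: (dispersed_open_trace KP dE oU).
  by exists V; split => //; exact: weak.
exact: (DNS_complements T_cont T_DNS KP).
Qed.
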